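(* Fix an integer $n\ge 3$ and $p\in(0,1)$, and define for $x\in[2,n-1]$ \[ \varphi(x)=\Bigl(\Bigl(\tfrac{n}{n-1}\Bigr)^p-1\Bigr)^{1/(1-p)}(n-x)+\Bigl(\Bigl(\tfrac{n}{n-1}\Bigr)^p(x-1)-x+2\Bigr)^{1/(1-p)}(n-x+2)^{-p/(1-p)}. \] Then $\varphi$ is convex on $[2,n-1]$ and $\varphi(x)\le 1$ for all $x\in[2,n-1]$. *)

From Stdlib Require Import Reals.
Open Scope R_scope.

(* phi n p x as in the paper. All bases of real powers are positive on
   [2, n-1] (since (n/(n-1))^p >= 1), so Rpower is the usual real power. *)
Definition phi (n : nat) (p x : R) : R :=
  let c := Rpower (INR n / (INR n - 1)) p in
  Rpower (c - 1) (1 / (1 - p)) * (INR n - x)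
  + Rpower (c * (x - 1) - x + 2) (1 / (1 - p))
    * Rpower (INR n - x + 2) (- p / (1 - p)).

Definition convex_on (a b : R) (f : R -> R) : Prop :=
  forall x y t, a <= x <= b -> a <= y <= b -> 0 <= t <= 1 ->
    f (t * x + (1 - t) * y) <= t * f x + (1 - t) * f y.

(* Writing a = 1/(1-p), alpha = (n/(n-1))^p - 1, u = alpha (x-1) + 1 and
   v = n - x + 2, one has phi x = alpha^a (n - x) + v (u/v)^a.  The perspective
   (u, v) |-> v (u/v)^a of the convex power z^a is jointly convex and u, v are
   affine in x, so phi is convex.  For the bound, Bernoulli's inequality gives
   alpha (n-1) <= p; both alpha and u/v are at most (1+p)/3, so
   phi x <= (alpha (n - x) + u) ((1+p)/3)^(a-1) <= (1+p) ((1+p)/3)^(a-1),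
   and the last quantity is at most 1 because 1 + p <= 3^p. *)

From Stdlib Require Import Reals Lra Psatz.
Open Scope R_scope.

Lemma Rpower_gt0 x y : 0 < Rpower x y.
Proof. apply exp_pos. Qed.

Lemma Rpower_add1 x y : 0 < x -> Rpower x (1 + y) = x * Rpower x y.
Proof. intros Hx; rewrite Rpower_plus, Rpower_1; lra. Qed.

Lemma Rpower_Rinv x y : 0 < x -> Rpower (/ x) y = / Rpower x y.
Proof.
  intros Hx; unfold Rpower; rewrite ln_Rinv by lra.
  replace (y * - ln x) with (- (y * ln x)) by ring; apply exp_Ropp.
Qed.

Lemma ln_le_sub1 y : 0 < y -> ln y <= y - 1.
Proof.
  intros Hy; pose proof (exp_ineq1_le (ln y)) as H.
  rewrite exp_ln in H by lra; lra.
Qed.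

Lemma ln_le x y : 0 < x -> x <= y -> ln x <= ln y.
Proof.
  intros Hx [Hlt | ->]; [left; apply ln_increasing |]; lra.
Qed.

Lemma Rpower_bernoulli_le x p : 0 < x -> 0 <= p <= 1 -> Rpower x p <= p * x + (1 - p).
Proof.
  intros Hx Hp; set (g := p * x + (1 - p)).
  assert (Hg : 0 < g) by (unfold g; nra).
  assert (Hln : p * ln x <= ln g).
  { (* Average [ln (x/g) <= x/g - 1] and [ln (1/g) <= 1/g - 1] with weights p, 1-p. *)
    pose proof (ln_le_sub1 (x / g) ltac:(apply Rdiv_lt_0_compat; lra)) as Hx'.
    pose proof (ln_le_sub1 (/ g) ltac:(apply Rinv_0_lt_compat; lra)) as Hg'.
    unfold Rdiv in Hx'; rewrite ln_mult, ln_Rinv in Hx' by (try apply Rinv_0_lt_compat; lra).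
    rewrite ln_Rinv in Hg' by lra.
    assert (p * (x / g - 1) + (1 - p) * (/ g - 1) = 0) by (unfold g in *; field; lra).
    nra. }
  rewrite <- (exp_ln g) by exact Hg; unfold Rpower.
  destruct Hln as [Hlt | ->]; [left; apply exp_increasing |]; lra.
Qed.

(* The exponent-[0, 1] case applied to y = r^a and the exponent 1/a. *)
Lemma Rpower_bernoulli_ge r a : 0 < r -> 1 <= a -> 1 + a * (r - 1) <= Rpower r a.
Proof.
  intros Hr Ha; set (y := Rpower r a).
  assert (Hinva : 0 <= / a <= 1).
  { split; [left; apply Rinv_0_lt_compat; lra|].
    rewrite <- Rinv_1; apply Rinv_le_contravar; lra. }
  pose proof (Rpower_bernoulli_le y (/ a) (Rpower_gt0 _ _) Hinva) as H.
  unfold y in H; rewrite Rpower_mult in H.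
  replace (a * / a) with 1 in H by (field; lra); rewrite Rpower_1 in H by lra.
  fold y in H; apply Rmult_le_compat_l with (r := a) in H; [|lra].
  replace (a * (/ a * y + (1 - / a))) with (y + a - 1) in H by (field; lra); lra.
Qed.

Lemma Rpower_tangent_le z z0 a : 0 < z -> 0 < z0 -> 1 <= a ->
  Rpower z0 a + a * Rpower z0 (a - 1) * (z - z0) <= Rpower z a.
Proof.
  intros Hz Hz0 Ha.
  pose proof (Rpower_bernoulli_ge (z / z0) a ltac:(apply Rdiv_lt_0_compat; lra) Ha) as H.
  replace z with (z0 * (z / z0)) at 2 by (field; lra).
  rewrite <- Rpower_mult_distr by (try apply Rdiv_lt_0_compat; lra).
  replace (a - 1) with (a + Ropp 1) by ring.
  rewrite Rpower_plus, Rpower_Ropp, Rpower_1 by lra.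
  pose proof (Rpower_gt0 z0 a).
  set (K := Rpower z0 a) in *; set (r := Rpower (z / z0) a) in *.
  replace (K + a * (K * / z0) * (z - z0)) with (K * (1 + a * (z / z0 - 1))) by (field; lra).
  apply Rmult_le_compat_l; lra.
Qed.

Lemma Rpower_le_mul_Rpower w k a : 1 <= a -> 0 < w <= k ->
  Rpower w a <= w * Rpower k (a - 1).
Proof.
  intros Ha Hw.
  replace a with (1 + (a - 1)) at 1 by ring; rewrite Rpower_add1 by lra.
  apply Rmult_le_compat_l; [lra|]; apply Rle_Rpower_l; lra.
Qed.

Definition persp (a u v : R) : R := v * Rpower (u / v) a.

Lemma persp_Rpower u v a : 0 < u -> 0 < v ->
  Rpower u a * Rpower v (1 - a) = persp a u v.
Proof.
  intros Hu Hv; unfold persp, Rdiv.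
  rewrite <- Rpower_mult_distr, Rpower_Rinv by (try apply Rinv_0_lt_compat; lra).
  replace (1 - a) with (1 + - a) by ring; rewrite Rpower_add1, Rpower_Ropp by lra.
  pose proof (Rpower_gt0 v a); field; lra.
Qed.

Lemma persp_convex a u1 v1 u2 v2 t : 1 <= a ->
  0 < u1 -> 0 < v1 -> 0 < u2 -> 0 < v2 -> 0 <= t <= 1 ->
  persp a (t * u1 + (1 - t) * u2) (t * v1 + (1 - t) * v2)
  <= t * persp a u1 v1 + (1 - t) * persp a u2 v2.
Proof.
  intros Ha Hu1 Hv1 Hu2 Hv2 Ht; unfold persp.
  set (U := t * u1 + (1 - t) * u2); set (V := t * v1 + (1 - t) * v2).
  assert (HU : 0 < U) by (unfold U; nra); assert (HV : 0 < V) by (unfold V; nra).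
  set (z0 := U / V); assert (Hz0 : 0 < z0) by (apply Rdiv_lt_0_compat; lra).
  (* Use the tangent to z^a at z0 = U/V; the linear parts cancel after averaging. *)
  pose proof (Rpower_tangent_le (u1 / v1) z0 a ltac:(apply Rdiv_lt_0_compat; lra) Hz0 Ha) as T1.
  pose proof (Rpower_tangent_le (u2 / v2) z0 a ltac:(apply Rdiv_lt_0_compat; lra) Hz0 Ha) as T2.
  set (K1 := Rpower z0 a) in *; set (K2 := Rpower z0 (a - 1)) in *.
  set (R1 := Rpower (u1 / v1) a) in *; set (R2 := Rpower (u2 / v2) a) in *.
  assert (E1 : v1 * (K1 + a * K2 * (u1 / v1 - z0)) <= v1 * R1) by (apply Rmult_le_compat_l; lra).
  assert (E2 : v2 * (K1 + a * K2 * (u2 / v2 - z0)) <= v2 * R2) by (apply Rmult_le_compat_l; lra).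
  assert (Hcancel : t * (v1 * (K1 + a * K2 * (u1 / v1 - z0)))
                    + (1 - t) * (v2 * (K1 + a * K2 * (u2 / v2 - z0))) = V * K1).
  { assert (Vz : V * z0 = U) by (unfold z0; field; lra).
    clearbody K1 K2 R1 R2 z0.
    transitivity (V * K1 + a * K2 * (U - V * z0)); [unfold U, V; field; lra|].
    rewrite Vz; ring. }
  nra.
Qed.

Lemma one_add_le_Rpower3 p : 0 <= p -> 1 + p <= Rpower 3 p.
Proof.
  intros Hp; unfold Rpower.
  assert (Hln3 : 1 <= ln 3).
  { rewrite <- (ln_exp 1); apply ln_le; [apply exp_pos | exact exp_le_3]. }
  pose proof (exp_ineq1_le (p * ln 3)); nra.
Qed.

Lemma mul_Rpower_third_le1 p : 0 < p < 1 ->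
  (1 + p) * Rpower ((1 + p) / 3) (1 / (1 - p) - 1) <= 1.
Proof.
  intros Hp.
  assert (Hexp : (1 + p) * Rpower ((1 + p) / 3) (1 / (1 - p) - 1)
                 = exp ((ln (1 + p) - p * ln 3) / (1 - p))).
  { unfold Rpower, Rdiv; rewrite ln_mult, ln_Rinv by lra.
    rewrite <- (exp_ln (1 + p)) at 1 by lra; rewrite <- exp_plus.
    f_equal; field; lra. }
  assert (Hnum : ln (1 + p) <= p * ln 3).
  { pose proof (one_add_le_Rpower3 p ltac:(lra)) as H3.
    unfold Rpower in H3; apply ln_le in H3; [|lra].
    rewrite ln_exp in H3; exact H3. }
  assert (Hneg : (ln (1 + p) - p * ln 3) / (1 - p) <= 0).
  { assert (0 < / (1 - p)) by (apply Rinv_0_lt_compat; lra).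
    unfold Rdiv; nra. }
  rewrite Hexp; apply Rle_trans with (exp 0); [|rewrite exp_0; lra].
  destruct Hneg as [Hlt | ->]; [left; apply exp_increasing|]; lra.
Qed.

Section Phi.

Variables (n : nat) (p : R).
Hypotheses (Hn : (3 <= n)%nat) (Hp : 0 < p < 1).

Let N := INR n.
Let a := 1 / (1 - p).
Let alpha := Rpower (N / (N - 1)) p - 1.

Lemma N_ge3 : 3 <= N.
Proof. apply (le_INR 3) in Hn; simpl in Hn; unfold N; lra. Qed.

Lemma exponent_gt1 : 1 < a.
Proof.
  unfold a; apply (Rmult_lt_reg_r (1 - p)); [lra|].
  field_simplify; lra.
Qed.

Lemma alpha_gt0 : 0 < alpha.
Proof.
  pose proof N_ge3 as HN.
  assert (1 < N / (N - 1)) by (apply (Rmult_lt_reg_r (N - 1)); field_simplify; lra).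
  unfold alpha; rewrite <- (Rpower_O (N / (N - 1))) at 2 by lra.
  pose proof (Rpower_lt (N / (N - 1)) 0 p); lra.
Qed.

Lemma alpha_mul_le : alpha * (N - 1) <= p.
Proof.
  pose proof N_ge3 as HN.
  pose proof (Rpower_bernoulli_le (N / (N - 1)) p
                ltac:(apply Rdiv_lt_0_compat; lra) ltac:(lra)) as H.
  replace (p * (N / (N - 1)) + (1 - p)) with (1 + p / (N - 1)) in H by (field; lra).
  apply (Rmult_le_reg_r (/ (N - 1))); [apply Rinv_0_lt_compat; lra|].
  unfold alpha; field_simplify; lra.
Qed.

Lemma phi_perspE x : 1 <= x < N + 2 ->
  phi n p x = Rpower alpha a * (N - x) + persp a (alpha * (x - 1) + 1) (N - x + 2).
Proof.
  intros Hx; pose proof alpha_gt0.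
  unfold phi; fold N a.
  replace (- p / (1 - p)) with (1 - a) by (unfold a; field; lra).
  replace (Rpower (N / (N - 1)) p * (x - 1) - x + 2) with (alpha * (x - 1) + 1)
    by (unfold alpha; ring).
  rewrite persp_Rpower; [reflexivity | nra | lra].
Qed.

Lemma phi_convex : convex_on 2 (N - 1) (phi n p).
Proof.
  intros x y t Hx Hy Ht; pose proof alpha_gt0; pose proof exponent_gt1.
  set (z := t * x + (1 - t) * y).
  assert (Hz : 2 <= z <= N - 1) by (unfold z; nra).
  rewrite !phi_perspE by lra.
  replace (alpha * (z - 1) + 1)
    with (t * (alpha * (x - 1) + 1) + (1 - t) * (alpha * (y - 1) + 1)) by (unfold z; ring).
  replace (N - z + 2) with (t * (N - x + 2) + (1 - t) * (N - y + 2)) by (unfold z; ring).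
  replace (N - z) with (t * (N - x) + (1 - t) * (N - y)) by (unfold z; ring).
  pose proof (persp_convex a (alpha * (x - 1) + 1) (N - x + 2) (alpha * (y - 1) + 1) (N - y + 2) t
                ltac:(lra) ltac:(nra) ltac:(lra) ltac:(nra) ltac:(lra) Ht).
  nra.
Qed.

Lemma phi_le1 x : 2 <= x <= N - 1 -> phi n p x <= 1.
Proof.
  intros Hx; pose proof N_ge3 as HN; pose proof alpha_gt0 as Halpha0.
  pose proof alpha_mul_le as Halpha1; pose proof exponent_gt1 as Ha.
  rewrite phi_perspE by lra; unfold persp.
  set (K := Rpower ((1 + p) / 3) (a - 1)).
  set (u := alpha * (x - 1) + 1); set (v := N - x + 2).
  assert (Hu : 0 < u) by (unfold u; nra).
  assert (Hv : 3 <= v) by (unfold v; lra).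
  assert (Halpha : alpha <= (1 + p) / 3) by nra.
  assert (Huv : u / v <= (1 + p) / 3).
  { apply (Rmult_le_reg_r v); [lra|]; unfold Rdiv; rewrite Rmult_assoc, Rinv_l by lra.
    unfold u; nra. }
  assert (T1 : Rpower alpha a * (N - x) <= alpha * (N - x) * K).
  { pose proof (Rpower_le_mul_Rpower alpha ((1 + p) / 3) a ltac:(lra) ltac:(lra)) as H.
    fold K in H; nra. }
  assert (T2 : v * Rpower (u / v) a <= u * K).
  { pose proof (Rpower_le_mul_Rpower (u / v) ((1 + p) / 3) a ltac:(lra)
                  ltac:(split; [apply Rdiv_lt_0_compat|]; lra)) as H.
    fold K in H.
    replace (u * K) with (v * (u / v * K)) by (field; lra).
    apply Rmult_le_compat_l; lra. }
  pose proof (mul_Rpower_third_le1 p Hp) as HK; fold a K in HK.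
  assert (0 <= K) by (left; apply Rpower_gt0).
  assert (Hsum : alpha * (N - x) + u <= 1 + p) by (unfold u; nra).
  nra.
Qed.

End Phi.

Theorem mainTheorem7 (n : nat) (p : R) :
  (3 <= n)%nat -> 0 < p < 1 ->
  convex_on 2 (INR n - 1) (phi n p) /\
  (forall x, 2 <= x <= INR n - 1 -> phi n p x <= 1).
Proof.
  intros Hn Hp; split.
  - now apply phi_convex.
  - now apply phi_le1.
Qed.
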